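(* Let $g,\ell$ be kernels on $X$ (with $g_z\ne0$, $\ell_z\ne0$ for all $z$) such that $\ell/g$ is positive semi-definite. Then for every $n\ge2$ and every $n$-point subset $\{\mu_1,\dots,\mu_n\}$ of $X$, $$\mathrm{dist}\big(\hat g_{\mu_1},\mathrm{span}\{\hat g_{\mu_2},\dots,\hat g_{\mu_n}\}\big)\le\mathrm{dist}\big(\hat\ell_{\mu_1},\mathrm{span}\{\hat\ell_{\mu_2},\dots,\hat\ell_{\mu_n}\}\big),$$ the distances being taken in $\mathcal{H}_g$ and $\mathcal{H}_\ell$ respectively.
   Context: A kernel on $X$ is a positive semi-definite function $k:X\times X\to\mathbb{C}$; $\mathcal{H}_k$ its reproducing kernel Hilbert space, $k_w=k(\cdot,w)$, $\hat k_w=k_w/\|k_w\|$. ''$\ell/g$ positive semi-definite'' means $\ell=gh$ for some positive semi-definite kernel $h$ on $X$. *)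

From HB Require Import structures.
From mathcomp Require Import all_boot all_order all_algebra.
From mathcomp Require Import complex.
From mathcomp Require Import classical_sets reals.
Set Implicit Arguments. Unset Strict Implicit. Unset Printing Implicit Defensive.
Import Order.TTheory GRing.Theory Num.Theory.
Local Open Scope ring_scope.
Local Open Scope classical_set_scope.
Local Open Scope complex_scope.

(* Positive semi-definite kernel k : X -> X -> C:
   sum_{i,j} c_i conj(c_j) k(x_i, x_j) >= 0 (in the order of C, i.e. real and
   nonnegative) for every finite family of points and coefficients. *)
Definition psd_kernel (R : realType) (X : Type) (k : X -> X -> R[i]) : Prop :=
  forall (m : nat) (x : 'I_m -> X) (c : 'I_m -> R[i]),
    0 <= \sum_(i < m) \sum_(j < m) c i * Num.conj (c j) * k (x i) (x j).

Definition kernel_quotient_psd (R : realType) (X : Type) (ell g : X -> X -> R[i]) : Prop :=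
  exists h : X -> X -> R[i], psd_kernel h /\ forall x y, ell x y = g x y * h x y.

(* Squared norm in H_k of  sum_i a_i k_{x_i}:  <k_x, k_y> = k(y, x). *)
Definition kvec_norm2 (R : realType) (X : Type) (k : X -> X -> R[i]) (m : nat)
    (x : 'I_m -> X) (a : 'I_m -> R[i]) : R :=
  complex.Re (\sum_(i < m) \sum_(j < m) a i * Num.conj (a j) * k (x j) (x i)).

(* Normalising factor: hat k_w = k_w / ||k_w||, ||k_w|| = sqrt (k(w,w)). *)
Definition khat_coef (R : realType) (X : Type) (k : X -> X -> R[i]) (w : X) : R[i] :=
  ((Num.sqrt (complex.Re (k w w)))^-1)%:C.

(* dist_{H_k}( hat k_{mu 0}, span { hat k_{mu (lift 0 j)} : j } ), computed as
   sqrt of the infimum over all elements hat k_{mu 0} + sum_{i>0} a_i hat k_{mu i}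
   (the span is finite-dimensional, hence closed). *)
Definition dist_first (R : realType) (X : Type) (k : X -> X -> R[i]) (m : nat)
    (mu : 'I_m.+1 -> X) : R :=
  Num.sqrt (inf [set kvec_norm2 k mu (fun i => a i * khat_coef k (mu i))
                 | a in [set a : 'I_m.+1 -> R[i] | a ord0 = 1]]).

From mathcomp Require Import all_boot all_order all_algebra.
From mathcomp Require Import complex.
From mathcomp Require Import classical_sets reals.
From mathcomp Require Import ring.
Import Order.TTheory GRing.Theory Num.Theory.
Local Open Scope ring_scope.

(* Let [G] and [L] be the Gram matrices of the normalised kernel vectors of [g] and
   [ell] at [mu], and [d] the squared distance for [g].  Minimality of [d] over
   [a] with [a 0 = 1] says exactly that [G - d E00] is positive semi-definite.
   Writing [ell = g h], [L] is the Hadamard product of [G] with a rescaled Gram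
   matrix [H] of [h] whose [(0,0)] entry is [1], so by the Schur product theorem
   [L - d E00 = (G - d E00) o H] is positive semi-definite too, i.e. the squared
   distance for [ell] is at least [d]. *)

Section PsdForms.
Context {C : numClosedFieldType} {m : nat}.
Implicit Types (A B H : 'I_m -> 'I_m -> C) (c d : 'I_m -> C) (p : 'I_m).

Definition sesq B c d := \sum_(i < m) \sum_(j < m) c i * (d j)^* * B i j.
Definition psd B := forall c, 0 <= sesq B c c.
Definition kdelta p : 'I_m -> C := fun a => (a == p)%:R.

Lemma eq_sesq A B c d : (forall i j, A i j = B i j) -> sesq A c d = sesq B c d.
Proof. by move=> eAB; apply: eq_bigr => i _; apply: eq_bigr => j _; rewrite eAB. Qed.

Lemma sesqDl B c c' d : sesq B (fun a => c a + c' a) d = sesq B c d + sesq B c' d.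
Proof.
rewrite /sesq -big_split /=; apply: eq_bigr => i _; rewrite -big_split /=.
by apply: eq_bigr => j _; ring.
Qed.

Lemma sesqDr B c d d' : sesq B c (fun a => d a + d' a) = sesq B c d + sesq B c d'.
Proof.
rewrite /sesq -big_split /=; apply: eq_bigr => i _; rewrite -big_split /=.
by apply: eq_bigr => j _; rewrite rmorphD /=; ring.
Qed.

Lemma sesqZl B k c d : sesq B (fun a => k * c a) d = k * sesq B c d.
Proof.
rewrite /sesq mulr_sumr; apply: eq_bigr => i _; rewrite mulr_sumr.
by apply: eq_bigr => j _; ring.
Qed.

Lemma sesqZr B k c d : sesq B c (fun a => k * d a) = k^* * sesq B c d.
Proof.
rewrite /sesq mulr_sumr; apply: eq_bigr => i _; rewrite mulr_sumr.
by apply: eq_bigr => j _; rewrite rmorphM /=; ring.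
Qed.

Lemma sesq_combine B c d k :
  sesq B (fun a => c a + k * d a) (fun a => c a + k * d a) =
  sesq B c c + k^* * sesq B c d + k * sesq B d c + k * k^* * sesq B d d.
Proof. by rewrite sesqDl !sesqDr !sesqZl !sesqZr; ring. Qed.

Lemma big_mul_kdelta (F : 'I_m -> C) p : \sum_i F i * kdelta p i = F p.
Proof.
rewrite (bigD1 p) //= big1 ?addr0; first by rewrite /kdelta eqxx mulr1.
by move=> i /negbTE; rewrite /kdelta => ->; rewrite mulr0.
Qed.

Lemma conj_kdelta p a : (kdelta p a)^* = kdelta p a.
Proof. by rewrite /kdelta; case: (a == p); rewrite ?rmorph0 ?rmorph1. Qed.

Lemma sesq_kdeltar B c p : sesq B c (kdelta p) = \sum_i c i * B i p.
Proof.
apply: eq_bigr => i _; rewrite -(big_mul_kdelta (fun j => c i * B i j)).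
by apply: eq_bigr => j _; rewrite conj_kdelta; ring.
Qed.

Lemma sesq_kdeltal B d p : sesq B (kdelta p) d = \sum_j (d j)^* * B p j.
Proof.
rewrite /sesq exchange_big /=; apply: eq_bigr => j _.
rewrite -(big_mul_kdelta (fun i => (d j)^* * B i j)).
by apply: eq_bigr => i _; ring.
Qed.

Lemma sesq_kdelta B p q : sesq B (kdelta p) (kdelta q) = B p q.
Proof.
rewrite sesq_kdeltal -(big_mul_kdelta (B p) q).
by apply: eq_bigr => j _; rewrite conj_kdelta mulrC.
Qed.

Lemma sesq_sub_kdelta B k p c d :
  sesq (fun i j => B i j - k * kdelta p i * kdelta p j) c d =
  sesq B c d - k * c p * (d p)^*.
Proof.
have -> : k * c p * (d p)^* = \sum_i \sum_j c i * (d j)^* * (k * kdelta p i * kdelta p j).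
  transitivity (\sum_i c i * (d p)^* * k * kdelta p i).
    by rewrite big_mul_kdelta; ring.
  apply: eq_bigr => i _; rewrite -(big_mul_kdelta (fun j => c i * (d j)^* * k * kdelta p i)).
  by apply: eq_bigr => j _; ring.
rewrite /sesq -sumrB; apply: eq_bigr => i _; rewrite -sumrB.
by apply: eq_bigr => j _; ring.
Qed.

Lemma psd_diag_ge0 B p : psd B -> 0 <= B p p.
Proof. by move=> psdB; rewrite -sesq_kdelta; apply: psdB. Qed.

Lemma psd_diag_conj B p : psd B -> (B p p)^* = B p p.
Proof. by move=> psdB; apply/CrealP/ger0_real/psd_diag_ge0. Qed.

(* Testing positivity on [kdelta i + kdelta j] and [kdelta i + 'i kdelta j]
   shows that [B i j + B j i] and ['i (B j i - B i j)] are real. *)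
Lemma psd_adjoint B i j : psd B -> B j i = (B i j)^*.
Proof.
move=> psdB.
have real_form k : B i i + k^* * B i j + k * B j i + k * k^* * B j j \is Num.real.
  by rewrite -!sesq_kdelta -sesq_combine; apply/ger0_real/psdB.
have real_diag q : B q q \is Num.real by apply/ger0_real/psd_diag_ge0.
have real_sum : B i j + B j i \is Num.real.
  have -> : B i j + B j i = (B i i + 1^* * B i j + 1 * B j i + 1 * 1^* * B j j)
                             - B i i - B j j by rewrite rmorph1; ring.
  by rewrite !rpredB.
have real_diff : 'i * (B j i - B i j) \is Num.real.
  have -> : 'i * (B j i - B i j) = (B i i + 'i^* * B i j + 'i * B j i
                + 'i * 'i^* * B j j) - B i i - B j j.
    by rewrite conjCi mulrN -expr2 sqrCi; ring.
  by rewrite !rpredB.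
move/CrealP: real_sum; move/CrealP: real_diff.
rewrite rmorphM rmorphB rmorphD /= conjCi => e_diff e_sum.
apply: (@mulfI _ 2); first by rewrite pnatr_eq0.
have -> : 2 * B j i = (B i j + B j i) - 'i * ('i * (B j i - B i j)).
  by rewrite mulrA -expr2 sqrCi; ring.
by rewrite -e_sum -e_diff mulrA mulrN -expr2 sqrCi; ring.
Qed.

Lemma psd_diag0_eq0 B i j : psd B -> B j j = 0 -> B i j = 0.
Proof.
move=> psdB Bjj0; apply/eqP; apply: contraT => Bij_neq0.
have Bji : B j i = (B i j)^* by apply: psd_adjoint.
(* As [B j j = 0], the form at [kdelta i + k kdelta j] is affine in [k]; this [k] makes it [-1]. *)
pose k := - (B i i + 1) / (2 * (B i j)^*).
have conj_k : k^* = - (B i i + 1) / (2 * B i j).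
  by rewrite /k !(rmorphM, rmorphN, rmorphD, fmorphV) /= rmorph1 psd_diag_conj // conjCK.
have := psdB (fun a => kdelta i a + k * kdelta j a).
rewrite sesq_combine !sesq_kdelta Bjj0 Bji conj_k.
have -> : B i i + - (B i i + 1) / (2 * B i j) * B i j + k * (B i j)^*
          + k * (- (B i i + 1) / (2 * B i j)) * 0 = -1.
  by rewrite /k; field; rewrite conjC_eq0 Bij_neq0.
by rewrite oppr_ge0 ler10.
Qed.

Lemma psd_schur_complement B p : psd B -> B p p != 0 ->
  psd (fun i j => B i j - B i p * (B j p)^* / B p p).
Proof.
move=> psdB Bpp_neq0 c.
pose u := \sum_i c i * B i p.
have u_conj : \sum_j (c j)^* * B p j = u^*.
  by rewrite rmorph_sum; apply: eq_bigr => j _; rewrite rmorphM (psd_adjoint B j p psdB).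
have -> : sesq (fun i j => B i j - B i p * (B j p)^* / B p p) c c
          = sesq B c c - u * u^* / B p p.
  rewrite /u rmorph_sum /= big_distrl /= big_distrl /= /sesq -sumrB.
  apply: eq_bigr => i _; rewrite big_distrr /= big_distrl /= -sumrB.
  by apply: eq_bigr => j _; rewrite rmorphM /=; ring.
have := psdB (fun a => c a + (- u / B p p) * kdelta p a).
rewrite sesq_combine sesq_kdelta sesq_kdeltar sesq_kdeltal -/u u_conj.
rewrite rmorphM rmorphN fmorphV /= psd_diag_conj //.
suff -> : sesq B c c + - u^* / B p p * u + - u / B p p * u^*
          + - u / B p p * (- u^* / B p p) * B p p = sesq B c c - u * u^* / B p p by [].
by field.
Qed.


Definition vanish_from t B := forall i j : 'I_m, (t <= i)%N || (t <= j)%N -> B i j = 0.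

Definition sum_of_rank1 B := exists K (w : 'I_K -> C) (v : 'I_K -> 'I_m -> C),
  (forall k, 0 <= w k) /\ forall i j, B i j = \sum_(k < K) w k * v k i * (v k j)^*.

Lemma sum_of_rank1_add B B' w0 v0 : sum_of_rank1 B -> 0 <= w0 ->
  (forall i j, B' i j = B i j + w0 * v0 i * (v0 j)^*) -> sum_of_rank1 B'.
Proof.
move=> [K [w [v [w_ge0 eB]]]] w0_ge0 eB'.
exists K.+1, (fun k => if unlift ord0 k is Some k' then w k' else w0),
  (fun k i => if unlift ord0 k is Some k' then v k' i else v0 i).
split=> [k|i j]; first by case: unliftP.
rewrite big_ord_recl /= unlift_none eB' eB addrC.
by under eq_bigr => k _ do rewrite liftK.
Qed.

Lemma vanish_from_pred {t B} (t_lt_m : (t < m)%N) :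
  vanish_from t.+1 B -> (forall j, B (Ordinal t_lt_m) j = 0) ->
  (forall i, B i (Ordinal t_lt_m) = 0) -> vanish_from t B.
Proof.
move=> vB row0 col0 i j /orP [] le_t.
  case: (ltngtP t i) le_t => // [lt_ti _|eq_ti _]; first by apply: vB; rewrite lt_ti.
  by have -> : i = Ordinal t_lt_m by apply/val_inj.
case: (ltngtP t j) le_t => // [lt_tj _|eq_tj _]; first by apply: vB; rewrite lt_tj orbT.
by have -> : j = Ordinal t_lt_m by apply/val_inj.
Qed.

(* Induction on the size [t] of the leading block carrying the entries of [B]:
   each step peels off the rank-one term of the pivot [t] via a Schur complement. *)
Lemma psd_vanish_sum_of_rank1 t B : psd B -> vanish_from t B -> sum_of_rank1 B.
Proof.
elim: t B => [|t IH] B psdB vB.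
  exists 0, (fun _ => 0), (fun _ _ => 0); split=> // i j.
  by rewrite big_ord0; apply: vB.
case: (ltnP t m) => [t_lt_m|m_le_t]; last first.
  by apply: IH => // i j; rewrite leqNgt (leq_trans (ltn_ord i)) // leqNgt (leq_trans (ltn_ord j)).
pose p := Ordinal t_lt_m.
have [Bpp0|Bpp_neq0] := eqVneq (B p p) 0.
  apply: IH => //; apply: (vanish_from_pred t_lt_m) => // [j|i].
    by rewrite (psd_adjoint B j p psdB) (psd_diag0_eq0 B j p psdB Bpp0) rmorph0.
  exact: psd_diag0_eq0.
pose B' i j := B i j - B i p * (B j p)^* / B p p.
have vB' : vanish_from t B'.
  apply: (vanish_from_pred t_lt_m) => [i j lt_t|j|i]; rewrite /B'.
  - case/orP: lt_t => lt_t; first by rewrite (vB i j) ?(vB i p) ?lt_t ?mul0r ?subr0.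
    by rewrite (vB i j) ?(vB j p) ?lt_t ?orbT // rmorph0 mulr0 mul0r subr0.
  - by rewrite mulrAC divff // mul1r (psd_adjoint B j p psdB) subrr.
  - by rewrite psd_diag_conj // mulfK // subrr.
have rank1_B' := IH B' (psd_schur_complement B p psdB Bpp_neq0) vB'.
apply: (sum_of_rank1_add _ _ (B p p)^-1 (B^~ p) rank1_B').
  by rewrite invr_ge0; apply: psd_diag_ge0.
by move=> i j; rewrite /B'; field.
Qed.

Lemma psd_sum_of_rank1 B : psd B -> sum_of_rank1 B.
Proof.
by move=> psdB; apply: (psd_vanish_sum_of_rank1 m) => // i j; rewrite leqNgt ltn_ord leqNgt ltn_ord.
Qed.

(* Schur product theorem: against a rank-one term [v v^*] the form of [A] is evaluated at [c v]. *)
Lemma psd_hadamard A B : psd A -> psd B -> psd (fun i j => A i j * B i j).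
Proof.
move=> psdA psdB c; have [K [w [v [w_ge0 eB]]]] := psd_sum_of_rank1 B psdB.
have -> : sesq (fun i j => A i j * B i j) c c =
    \sum_(k < K) w k * sesq A (fun a => c a * v k a) (fun a => c a * v k a).
  rewrite /sesq; under eq_bigr => i _ do under eq_bigr => j _ do
    rewrite eB mulr_sumr mulr_sumr.
  under eq_bigr => i _ do rewrite exchange_big.
  rewrite exchange_big /=; apply: eq_bigr => k _; rewrite mulr_sumr.
  apply: eq_bigr => i _; rewrite mulr_sumr; apply: eq_bigr => j _.
  by rewrite rmorphM; ring.
by apply: sumr_ge0 => k _; apply: mulr_ge0.
Qed.

Lemma psd_sub_kdeltaP B p k : psd B ->
  psd (fun i j => B i j - k * kdelta p i * kdelta p j) <->
  forall a, a p = 1 -> k <= sesq B a a.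
Proof.
move=> psdB; split=> [psdBk a ap1|le_k c].
  by have := psdBk a; rewrite sesq_sub_kdelta ap1 rmorph1 !mulr1 subr_ge0.
rewrite sesq_sub_kdelta; have [cp0|cp_neq0] := eqVneq (c p) 0.
  by rewrite cp0 mulr0 mul0r subr0.
pose a i := (c p)^-1 * c i.
have -> : sesq B c c = c p * (c p)^* * sesq B a a.
  by rewrite sesqZl sesqZr fmorphV; field; rewrite conjC_eq0 cp_neq0.
have -> : c p * (c p)^* * sesq B a a - k * c p * (c p)^*
          = c p * (c p)^* * (sesq B a a - k) by ring.
apply: mulr_ge0; first exact: mul_conjC_ge0.
by rewrite subr_ge0 le_k // /a mulVf.
Qed.

Lemma psd_hadamard_sub_kdelta B H p k :
  psd (fun i j => B i j - k * kdelta p i * kdelta p j) -> psd H -> H p p = 1 ->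
  psd (fun i j => B i j * H i j - k * kdelta p i * kdelta p j).
Proof.
move=> psdBk psdH Hpp1 c; rewrite -(@eq_sesq (fun i j => (B i j - k * kdelta p i * kdelta p j) * H i j)).
  exact: psd_hadamard.
move=> i j /=; rewrite /kdelta.
by case: eqP => [->|_]; case: eqP => [->|_]; rewrite /= ?Hpp1; ring.
Qed.

End PsdForms.

Section KernelGram.
Context {R : realType} {X : Type}.
Implicit Types (k g ell h : X -> X -> R[i]) (w z : X).

Lemma lec_Re (x : R) (z : R[i]) : 0 <= z -> (x%:C%C <= z) = (x <= complex.Re z).
Proof. by rewrite !lecE /= => /andP[/eqP -> _]; rewrite eqxx. Qed.

Lemma psd_kernel_gram k m (mu : 'I_m -> X) (r : 'I_m -> R[i]) :
  psd_kernel k -> (forall i, (r i)^* = r i) ->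
  psd (fun i j => r i * r j * k (mu j) (mu i)).
Proof.
move=> psd_k r_real c; have := psd_k m mu (fun a => (c a * r a)^*).
suff -> : sesq (fun i j => r i * r j * k (mu j) (mu i)) c c =
  \sum_(i < m) \sum_(j < m) (c i * r i)^* * (c j * r j)^*^* * k (mu i) (mu j) by [].
rewrite /sesq exchange_big; apply: eq_bigr => i _; apply: eq_bigr => j _.
by rewrite conjCK rmorphM /= r_real; ring.
Qed.

Lemma kernel_diag_gt0 {k} : psd_kernel k -> (forall z, exists x, k x z != 0) ->
  forall z, 0 < k z z.
Proof.
move=> psd_k k_neq0 z; have [x kxz_neq0] := k_neq0 z.
pose f (i : 'I_2) := if i == ord0 then x else z.
have psdB := psd_kernel_gram k 2 f (fun=> 1) psd_k (fun=> conjC1 _).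
have := psd_diag_ge0 _ ord_max psdB; rewrite /f /= !mul1r le_eqVlt => /orP[/eqP kzz0|//].
have := psd_diag0_eq0 _ ord0 ord_max psdB; rewrite /f /= !mul1r -kzz0 => /(_ erefl) kzx0.
have := psd_adjoint _ ord0 ord_max psdB; rewrite /f /= !mul1r kzx0 rmorph0 => kxz0.
by rewrite kxz0 eqxx in kxz_neq0.
Qed.

Lemma khat_coef_conj k w : (khat_coef k w)^* = khat_coef k w.
Proof. exact: conjc_real. Qed.

Lemma khat_coef_sqrK {k w} : 0 < k w w -> khat_coef k w ^+ 2 * k w w = 1.
Proof.
move=> kww_gt0; have Re_gt0 : 0 < complex.Re (k w w) by move: kww_gt0; rewrite ltcE => /andP[].
rewrite /khat_coef -{2}(RRe_real (gtr0_real kww_gt0)) -rmorphXn -rmorphM /=.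
by rewrite exprVn sqr_sqrtr ?ltW // mulVf ?gt_eqF.
Qed.

Definition khat_gram k {m} (mu : 'I_m -> X) i j :=
  khat_coef k (mu i) * khat_coef k (mu j) * k (mu j) (mu i).

Lemma psd_khat_gram {k m} (mu : 'I_m -> X) : psd_kernel k -> psd (khat_gram k mu).
Proof. by move=> psd_k; apply: psd_kernel_gram => // i; apply: khat_coef_conj. Qed.

Lemma kvec_norm2_khat k m (mu : 'I_m -> X) a :
  kvec_norm2 k mu (fun i => a i * khat_coef k (mu i)) = complex.Re (sesq (khat_gram k mu) a a).
Proof.
rewrite /kvec_norm2 /sesq; congr complex.Re; apply: eq_bigr => i _; apply: eq_bigr => j _.
by rewrite /khat_gram rmorphM /= khat_coef_conj; ring.
Qed.

Definition khat_ratio ell g w := khat_coef ell w / khat_coef g w.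

Section Quotient.
Context {g ell h : X -> X -> R[i]}.
Hypothesis ell_gh : forall x y, ell x y = g x y * h x y.
Hypotheses (g_diag_gt0 : forall z, 0 < g z z) (ell_diag_gt0 : forall z, 0 < ell z z).

Lemma khat_coef_neq0 w : khat_coef g w != 0.
Proof.
apply/eqP => coef0; have := khat_coef_sqrK (g_diag_gt0 w).
by rewrite coef0 expr0n mul0r => /eqP; rewrite eq_sym oner_eq0.
Qed.

Lemma khat_gram_quotient m (mu : 'I_m -> X) i j :
  khat_gram ell mu i j =
  khat_gram g mu i j * (khat_ratio ell g (mu i) * khat_ratio ell g (mu j) * h (mu j) (mu i)).
Proof.
rewrite /khat_gram /khat_ratio ell_gh.
move: (khat_coef_neq0 (mu i)) (khat_coef_neq0 (mu j)).
move: (khat_coef g _) (khat_coef g _) (khat_coef ell _) (khat_coef ell _) => a b c d a0 b0.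
by field; rewrite a0 b0.
Qed.

Lemma khat_ratio_diag w : khat_ratio ell g w * khat_ratio ell g w * h w w = 1.
Proof.
have := khat_coef_sqrK (g_diag_gt0 w); have := khat_coef_sqrK (ell_diag_gt0 w).
have := khat_coef_neq0 w; rewrite /khat_ratio ell_gh.
move: (khat_coef g w) (khat_coef ell w) (g w w) (h w w) => a b x y a0 ell1 g1.
rewrite -ell1; have -> : x = (a ^+ 2)^-1 by rewrite -[RHS]mulr1 -g1 mulKf // expf_neq0.
by field.
Qed.

End Quotient.

Lemma dist_first_sqr_le k m (mu : 'I_m.+1 -> X) a : psd_kernel k -> a ord0 = 1 ->
  dist_first k mu ^+ 2 <= complex.Re (sesq (khat_gram k mu) a a).
Proof.
move=> psd_k a0; rewrite /dist_first; set S := (E in inf E).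
have S_ge0 : lbound S 0.
  move=> _ [b _ <-]; rewrite kvec_norm2_khat -(lec_Re 0) //; exact: psd_khat_gram.
have Sa : S (complex.Re (sesq (khat_gram k mu) a a)).
  by exists a => //; rewrite kvec_norm2_khat.
rewrite sqr_sqrtr; first by apply: ge_inf Sa; exists 0.
by apply: lb_le_inf S_ge0; exists (complex.Re (sesq (khat_gram k mu) a a)).
Qed.

Lemma le_dist_first k m (mu : 'I_m.+1 -> X) (d : R) :
  (forall a, a ord0 = 1 -> d <= complex.Re (sesq (khat_gram k mu) a a)) ->
  Num.sqrt d <= dist_first k mu.
Proof.
move=> d_le; apply/ler_wsqrtr/lb_le_inf; first by exists (kvec_norm2 k mu (fun i => 1 * khat_coef k (mu i))), (fun=> 1).
by move=> _ [a a0 <-]; rewrite kvec_norm2_khat; apply: d_le.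
Qed.

End KernelGram.

Theorem lemma4p8 (R : realType) (X : Type) (g ell : X -> X -> R[i])
  (hg : psd_kernel g) (hl : psd_kernel ell)
  (hg0 : forall z : X, exists x : X, g x z != 0)
  (hl0 : forall z : X, exists x : X, ell x z != 0)
  (hq : kernel_quotient_psd ell g)
  (n : nat) (mu : 'I_n.+2 -> X) (hmu : injective mu) :
  dist_first g mu <= dist_first ell mu.
Proof.
have [h [psd_h ell_gh]] := hq.
have g_gt0 := kernel_diag_gt0 hg hg0; have ell_gt0 := kernel_diag_gt0 hl hl0.
pose d := dist_first g mu ^+ 2.
pose E (i j : 'I_n.+2) : R[i] := d%:C%C * kdelta ord0 i * kdelta ord0 j.
pose H i j := khat_ratio ell g (mu i) * khat_ratio ell g (mu j) * h (mu j) (mu i).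
have psd_GE : psd (fun i j => khat_gram g mu i j - E i j).
  apply/(psd_sub_kdeltaP _ _ _ (psd_khat_gram mu hg)) => a a0.
  by rewrite lec_Re ?dist_first_sqr_le //; apply: psd_khat_gram.
have psd_H : psd H.
  by apply: psd_kernel_gram => // i; rewrite rmorphM fmorphV /= !khat_coef_conj.
have psd_LE : psd (fun i j => khat_gram ell mu i j - E i j).
  move=> c; rewrite (eq_sesq _ (fun i j => khat_gram g mu i j * H i j - E i j)) => [|i j].
    exact: psd_hadamard_sub_kdelta psd_GE psd_H (khat_ratio_diag ell_gh g_gt0 ell_gt0 _) c.
  by rewrite (khat_gram_quotient ell_gh g_gt0).
rewrite -[dist_first g mu]ger0_norm ?sqrtr_ge0 // -sqrtr_sqr.
apply: le_dist_first => a a0; rewrite -lec_Re ?psd_khat_gram //.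
exact: (psd_sub_kdeltaP _ _ _ (psd_khat_gram mu hl)).1 psd_LE a a0.
Qed.
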